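(* Let $b(\lambda)=\frac14\lambda^4+\frac12p\lambda^2+q\lambda$ with $p<0$, $q\in\mathbb{R}$, and $B_\eta(\lambda)=\eta\lambda-b(\lambda)$. Define $\lambda:\mathbb{R}\to\mathbb{R}$ by: for $\eta\neq q$, $\lambda(\eta)$ is the unique point at which $B_\eta$ attains its global maximum (this point lies below $-\sqrt{-p}$ when $\eta<q$ and above $\sqrt{-p}$ when $\eta>q$), and $\lambda(q)=\sqrt{-p}$. Then $\eta\mapsto\lambda(\eta)$ maps $\mathbb{R}$ onto $\mathbb{R}\setminus[-\sqrt{-p},\sqrt{-p})$, and it is (a) differentiable on $\mathbb{R}\setminus\{q\}$, (b) continuous from the right at $\eta=q$, and (c) increasing and injective on $\mathbb{R}$. *)

From Stdlib Require Import Reals ClassicalEpsilon.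
From Coquelicot Require Import Coquelicot.
Open Scope R_scope.

Definition b (p q x : R) : R := /4 * x ^ 4 + /2 * p * x ^ 2 + q * x.

Definition B (p q eta x : R) : R := eta * x - b p q x.

Definition is_global_max_B (p q eta x : R) : Prop :=
  forall y : R, B p q eta y <= B p q eta x.

Definition lam (p q eta : R) : R :=
  match Req_EM_T eta q with
  | left _ => sqrt (- p)
  | right _ => epsilon (inhabits 0) (fun x => is_global_max_B p q eta x)
  end.

(** The critical points of [B_eta] are the roots of [b' x = eta], where
    [b' x = x^3 + p x + q].  Expanding [B] around a critical point [x] gives
    [B_eta x - B_eta y = (x - y)^2 / 4 * (2 (x^2 + p) + (x + y)^2)], so when
    [x^2 > -p] the point [x] is the unique global maximiser of [B_(b' x)].
    Since [b'] is increasing on each half-line [|x| > sqrt(-p)], with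
    [b'(±sqrt(-p)) = q], [lam] is the inverse of [b'] on these half-lines:
    it is increasing, its range is as claimed, and the difference quotients
    of [lam] are the reciprocals of those of [b'], which gives continuity and
    differentiability away from [q] and right continuity at [q]. *)
From Stdlib Require Import Reals Lra Psatz ClassicalEpsilon.
From Coquelicot Require Import Coquelicot.
Open Scope R_scope.

Definition b' (p q x : R) : R := x ^ 3 + p * x + q.

Definition b'_divdiff (p x y : R) : R := x ^ 2 + x * y + y ^ 2 + p.

Lemma b'_sub p q x y : b' p q x - b' p q y = (x - y) * b'_divdiff p x y.
Proof. unfold b', b'_divdiff; ring. Qed.

Lemma b'_opp p q x : b' p q (- x) = 2 * q - b' p q x.
Proof. unfold b'; ring. Qed.

Lemma b'_divdiff_ge p x y : 0 <= x * y -> y ^ 2 + p <= b'_divdiff p x y.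
Proof. unfold b'_divdiff; nra. Qed.

Lemma B_b'_sub p q x y :
  B p q (b' p q x) x - B p q (b' p q x) y
  = (x - y) ^ 2 / 4 * (2 * (x ^ 2 + p) + (x + y) ^ 2).
Proof. unfold B, b, b'; field. Qed.

Lemma is_global_max_B_b' p q x :
  0 < x ^ 2 + p -> is_global_max_B p q (b' p q x) x.
Proof.
intros Hx y; pose proof (B_b'_sub p q x y).
assert (0 <= (x - y) ^ 2 / 4 * (2 * (x ^ 2 + p) + (x + y) ^ 2)); [|lra].
apply Rmult_le_pos; [|pose proof (pow2_ge_0 (x + y)); lra].
apply Rmult_le_pos; [apply pow2_ge_0|lra].
Qed.

Lemma is_global_max_B_b'_unique p q x y :
  0 < x ^ 2 + p -> is_global_max_B p q (b' p q x) y -> y = x.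
Proof.
intros Hx Hy.
pose proof (is_global_max_B_b' p q x Hx y) as Hxy; specialize (Hy x).
pose proof (B_b'_sub p q x y) as E.
assert (Hpos : 0 < 2 * (x ^ 2 + p) + (x + y) ^ 2)
  by (pose proof (pow2_ge_0 (x + y)); lra).
assert (Z : (x - y) ^ 2 / 4 * (2 * (x ^ 2 + p) + (x + y) ^ 2) = 0) by lra.
apply Rmult_integral in Z; destruct Z as [Z|Z]; nra.
Qed.

Lemma lam_q p q : lam p q q = sqrt (- p).
Proof. unfold lam; destruct (Req_EM_T q q); [reflexivity|congruence]. Qed.

Lemma ball_R (x eps y : R) : ball x eps y <-> Rabs (y - x) < eps.
Proof. reflexivity. Qed.

Section Lambda.

Variables p q : R.
Hypothesis hp : p < 0.

Local Notation s := (sqrt (- p)).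

Lemma sqrt_opp_gt0 : 0 < s.
Proof. apply sqrt_lt_R0; lra. Qed.

Lemma sqrt_opp_sqr : s * s = - p.
Proof. apply sqrt_sqrt; lra. Qed.

Lemma sq_add_gt0_outer x : x < - s \/ s < x -> 0 < x ^ 2 + p.
Proof. pose proof sqrt_opp_gt0; pose proof sqrt_opp_sqr; intros [|]; nra. Qed.

Lemma b'_sqrt : b' p q s = q.
Proof.
unfold b'; replace (s ^ 3 + p * s) with (s * (s * s + p)) by ring.
rewrite sqrt_opp_sqr; ring.
Qed.

Lemma lam_b' x : 0 < x ^ 2 + p -> lam p q (b' p q x) = x.
Proof.
intros Hx; unfold lam; destruct (Req_EM_T (b' p q x) q) as [E|_].
- exfalso; unfold b' in E.
  assert (x * (x ^ 2 + p) = 0) as Z by lra.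
  apply Rmult_integral in Z; destruct Z as [->|]; nra.
- apply (is_global_max_B_b'_unique p q); [exact Hx|].
  apply (epsilon_spec (inhabits 0) (is_global_max_B p q (b' p q x))).
  exists x; exact (is_global_max_B_b' p q x Hx).
Qed.

Lemma b'_onto_gt e : q < e -> exists x, s < x /\ b' p q x = e.
Proof.
intros He; pose proof sqrt_opp_gt0 as Hs; pose proof sqrt_opp_sqr as Hs2.
set (M := s + 1 + (e - q)).
destruct (IVT (fun x => b' p q x - e) s M) as [x [[Hx1 Hx2] Hx]].
- unfold b'; reg.
- unfold M; lra.
- rewrite b'_sqrt; lra.
- (* With [c = e - q > 0], [b' M - e = M (1 + c) (2 s + 1 + c) - c > 0]. *)
  cbv beta; unfold b', M.
  assert (Hc : 0 < e - q) by lra.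
  assert (1 <= (1 + (e - q)) * (2 * s + 1 + (e - q))) by nra.
  assert (E : forall t, t ^ 3 + p * t = t * (t * t - s * s))
    by (intro t; rewrite Hs2; ring).
  rewrite E; nra.
- exists x; split; [|lra].
  destruct Hx1 as [|<-]; [assumption|].
  rewrite b'_sqrt in Hx; lra.
Qed.

Lemma b'_onto_lt e : e < q -> exists x, x < - s /\ b' p q x = e.
Proof.
intros He; destruct (b'_onto_gt (2 * q - e)) as [x [Hx Ex]]; [lra|].
exists (- x); split; [lra|].
rewrite b'_opp; lra.
Qed.

Lemma lam_gt_sqrt e : q < e -> s < lam p q e.
Proof.
intros He; destruct (b'_onto_gt e He) as [x [Hx <-]].
rewrite lam_b'; [lra|apply sq_add_gt0_outer; auto].
Qed.

Lemma lam_lt_opp_sqrt e : e < q -> lam p q e < - s.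
Proof.
intros He; destruct (b'_onto_lt e He) as [x [Hx <-]].
rewrite lam_b'; [lra|apply sq_add_gt0_outer; auto].
Qed.

Lemma lam_ge_sqrt e : q <= e -> s <= lam p q e.
Proof.
intros [He|<-]; [apply Rlt_le, lam_gt_sqrt; auto|rewrite lam_q; lra].
Qed.

Lemma lam_outer e : e <> q -> lam p q e < - s \/ s < lam p q e.
Proof.
intros He; destruct (Rtotal_order e q) as [H|[H|H]].
- left; apply lam_lt_opp_sqrt; auto.
- contradiction.
- right; apply lam_gt_sqrt; auto.
Qed.

Lemma b'_lam e : e <> q -> b' p q (lam p q e) = e.
Proof.
intros He; destruct (Rtotal_order e q) as [H|[H|H]]; [|contradiction|].
- destruct (b'_onto_lt e H) as [x [Hx <-]].
  rewrite lam_b'; [reflexivity|apply sq_add_gt0_outer; auto].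
- destruct (b'_onto_gt e H) as [x [Hx <-]].
  rewrite lam_b'; [reflexivity|apply sq_add_gt0_outer; auto].
Qed.

Lemma lam_sub_mul e e0 : e <> q -> e0 <> q ->
  (lam p q e - lam p q e0) * b'_divdiff p (lam p q e) (lam p q e0) = e - e0.
Proof.
intros He He0; rewrite <- (b'_sub p q), !b'_lam; auto.
Qed.

Lemma lam_divdiff_ge e e0 : 0 < (e - q) * (e0 - q) ->
  lam p q e0 ^ 2 + p <= b'_divdiff p (lam p q e) (lam p q e0).
Proof.
intros Hee0; pose proof sqrt_opp_gt0 as Hs; apply b'_divdiff_ge.
destruct (Rtotal_order e q) as [H|[H|H]].
- pose proof (lam_lt_opp_sqrt e H).
  assert (e0 < q) by nra; pose proof (lam_lt_opp_sqrt e0 ltac:(assumption)); nra.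
- subst; lra.
- pose proof (lam_gt_sqrt e H).
  assert (q < e0) by nra; pose proof (lam_gt_sqrt e0 ltac:(assumption)); nra.
Qed.

Lemma lam_sq_add_gt0 e : e <> q -> 0 < lam p q e ^ 2 + p.
Proof. intros He; apply sq_add_gt0_outer, lam_outer, He. Qed.

Lemma same_side_of_near e e0 :
  Rabs (e - e0) < Rabs (e0 - q) -> 0 < (e - q) * (e0 - q).
Proof. intros H; split_Rabs; nra. Qed.

Lemma lam_increasing_same_side x y :
  0 < (x - q) * (y - q) -> x < y -> lam p q x < lam p q y.
Proof.
intros Hxy Hlt.
assert (Hx : x <> q) by (intro; subst; nra).
assert (Hy : y <> q) by (intro; subst; nra).
pose proof (lam_sub_mul y x Hy Hx) as E.
pose proof (lam_divdiff_ge y x ltac:(nra)).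
pose proof (lam_sq_add_gt0 x Hx).
nra.
Qed.

Lemma lam_increasing x y : x < y -> lam p q x < lam p q y.
Proof.
intros Hlt; pose proof sqrt_opp_gt0.
destruct (Rlt_or_le x q) as [Hx|[Hx|<-]].
- destruct (Rlt_or_le y q) as [Hy|Hy].
  + apply lam_increasing_same_side; nra.
  + pose proof (lam_lt_opp_sqrt x Hx); pose proof (lam_ge_sqrt y Hy); lra.
- apply lam_increasing_same_side; nra.
- rewrite lam_q; apply lam_gt_sqrt, Hlt.
Qed.

Lemma lam_range y :
  (exists eta, lam p q eta = y) <-> (y < - s \/ s <= y).
Proof.
pose proof sqrt_opp_gt0 as Hs0; split.
- intros [eta <-]; destruct (Rlt_or_le eta q) as [H|H].
  + left; apply lam_lt_opp_sqrt, H.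
  + right; apply lam_ge_sqrt, H.
- intros Hy; destruct (Req_dec y s) as [->|Hs].
  + exists q; apply lam_q.
  + exists (b' p q y); apply lam_b', sq_add_gt0_outer; lra.
Qed.

Lemma lam_sub_sqrt_le e : q < e -> (lam p q e - s) * (2 * - p) <= e - q.
Proof.
intros He; pose proof sqrt_opp_gt0; pose proof sqrt_opp_sqr as Hs2.
pose proof (lam_gt_sqrt e He) as Hx.
pose proof (b'_sub p q (lam p q e) s) as E.
rewrite b'_lam, b'_sqrt in E by lra.
unfold b'_divdiff in E.
(* With [x = lam e], the divided difference is [x (x + s) >= 2 s^2 = - 2 p]. *)
assert (2 * - p <= lam p q e ^ 2 + lam p q e * s + s ^ 2 + p) by nra.
nra.
Qed.

Lemma lam_continuous_right : filterlim (lam p q) (at_right q) (locally (lam p q q)).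
Proof.
pose proof sqrt_opp_gt0; rewrite lam_q.
apply filterlim_locally; intros eps; pose proof (cond_pos eps).
assert (Hd : 0 < eps * (2 * - p)) by nra.
exists (mkposreal _ Hd); intros e He Hqe; rewrite ball_R in *; simpl in He.
pose proof (lam_sub_sqrt_le e Hqe); pose proof (lam_gt_sqrt e Hqe).
rewrite Rabs_pos_eq in * by lra.
apply (Rmult_lt_reg_r (2 * - p)); lra.
Qed.

Lemma lam_abs_sub_le e e0 : 0 < (e - q) * (e0 - q) ->
  Rabs (lam p q e - lam p q e0) * (lam p q e0 ^ 2 + p) <= Rabs (e - e0).
Proof.
intros Hee0.
assert (He : e <> q) by (intro; subst; nra).
assert (He0 : e0 <> q) by (intro; subst; nra).
pose proof (lam_divdiff_ge e e0 Hee0) as D; pose proof (lam_sq_add_gt0 e0 He0).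
rewrite <- (lam_sub_mul e e0 He He0), Rabs_mult, (Rabs_pos_eq (b'_divdiff _ _ _))
  by lra.
apply Rmult_le_compat_l; [apply Rabs_pos|exact D].
Qed.

Lemma lam_continuity_pt e0 : e0 <> q -> continuity_pt (lam p q) e0.
Proof.
intros He0 eps Heps; pose proof (lam_sq_add_gt0 e0 He0) as Hc.
exists (Rmin (Rabs (e0 - q)) (eps * (lam p q e0 ^ 2 + p))); split.
- apply Rmin_pos; [apply Rabs_pos_lt; lra|nra].
- intros e [_ He]; change (Rabs (lam p q e - lam p q e0) < eps).
  change (Rabs (e - e0) < Rmin (Rabs (e0 - q)) (eps * (lam p q e0 ^ 2 + p)))
    in He.
  pose proof (Rlt_le_trans _ _ _ He (Rmin_l _ _)) as Hnear.
  pose proof (Rlt_le_trans _ _ _ He (Rmin_r _ _)).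
  pose proof (lam_abs_sub_le e e0 (same_side_of_near e e0 Hnear)).
  apply (Rmult_lt_reg_r (lam p q e0 ^ 2 + p)); lra.
Qed.

Lemma lam_divided_difference e e0 : 0 < (e - q) * (e0 - q) -> e <> e0 ->
  (lam p q e - lam p q e0) / (e - e0) = / b'_divdiff p (lam p q e) (lam p q e0).
Proof.
intros Hee0 Hne.
assert (He : e <> q) by (intro; subst; nra).
assert (He0 : e0 <> q) by (intro; subst; nra).
pose proof (lam_divdiff_ge e e0 Hee0); pose proof (lam_sq_add_gt0 e0 He0).
rewrite <- (lam_sub_mul e e0 He He0); field; split.
- apply Rgt_not_eq; lra.
- intro Z; apply Hne; pose proof (lam_sub_mul e e0 He He0); rewrite Z in *; lra.
Qed.

Lemma lam_is_derive e0 : e0 <> q ->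
  is_derive (lam p q) e0 (/ (3 * lam p q e0 ^ 2 + p)).
Proof.
intros He0; apply is_derive_Reals.
set (x0 := lam p q e0); pose proof (lam_sq_add_gt0 e0 He0) as Hx0; fold x0 in Hx0.
set (g := fun x => / b'_divdiff p x x0).
assert (Hg : continuity_pt (fun e => g (lam p q e)) e0).
{ apply (continuity_pt_comp (lam p q) g); [exact (lam_continuity_pt e0 He0)|].
  apply continuity_pt_inv; [unfold b'_divdiff; reg|].
  cbv beta; apply Rgt_not_eq; fold x0.
  pose proof (b'_divdiff_ge p x0 x0 ltac:(nra)); lra. }
replace (/ (3 * x0 ^ 2 + p)) with (g x0) by (unfold g, b'_divdiff; f_equal; ring).
intros eps Heps; destruct (Hg eps Heps) as [alp [Halp Hnear]].
assert (Hd : 0 < Rmin alp (Rabs (e0 - q)))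
  by (apply Rmin_pos; [lra|apply Rabs_pos_lt; lra]).
exists (mkposreal _ Hd); intros h Hh0 Hh; simpl in Hh.
assert (Hh' : Rabs (e0 + h - e0) < Rmin alp (Rabs (e0 - q)))
  by (replace (e0 + h - e0) with h by ring; exact Hh).
replace h with (e0 + h - e0) at 2 by ring.
rewrite lam_divided_difference;
  [|apply same_side_of_near; exact (Rlt_le_trans _ _ _ Hh' (Rmin_r _ _))|lra].
apply (Hnear (e0 + h)); split; [split; [exact I|lra]|].
exact (Rlt_le_trans _ _ _ Hh' (Rmin_l _ _)).
Qed.

End Lambda.

Theorem proposition3p4 (p q : R) (hp : p < 0) :
  (forall y : R,
      (exists eta : R, lam p q eta = y) <-> (y < - sqrt (- p) \/ sqrt (- p) <= y)) /\
  (forall eta : R, eta <> q -> ex_derive (lam p q) eta) /\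
  filterlim (lam p q) (at_right q) (locally (lam p q q)) /\
  (forall x y : R, x < y -> lam p q x < lam p q y) /\
  (forall x y : R, lam p q x = lam p q y -> x = y).
Proof.
split; [exact (lam_range p q hp)|].
split; [intros eta He; eexists; exact (lam_is_derive p q hp eta He)|].
split; [exact (lam_continuous_right p q hp)|].
split; [exact (lam_increasing p q hp)|].
intros x y E; destruct (Rtotal_order x y) as [H|[H|H]]; [|exact H|];
  apply (lam_increasing p q hp) in H; lra.
Qed.
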